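(* Let $\mathcal{Y}$ be a measurable space, $\{Y_t\}_{t\ge0}$ a Markov chain on $\mathcal{Y}$ with transition kernel $P$, $H:\mathbb{R}^d\times\mathcal{Y}\to\mathbb{R}^d$, $h(w)\doteq\mathbb{E}_{y\sim d_{\mathcal{Y}}}[H(w,y)]$, satisfying the standing assumptions (A1)–(A3) below, and let $w_*$ be the fixed point of $h$. Let $w_0\in\mathbb{R}^d$, $\nu\in(0,1)$, $C_\alpha>0$, and $w_{t+1}=w_t+\alpha_t(H(w_t,Y_{t+1})-w_t)$ with $\alpha_t=\frac{C_\alpha}{(t+3)\ln^{\nu}(t+3)}$. Suppose $C_\alpha\ge\bar C_\alpha$ and that $C,C'$ and the positive integer $K$ are deterministic constants such that for every $\delta\in(0,1)$, with probability at least $1-\delta$, for all $t\ge0$, $\|w_t-w_*\|^2\le a(t)\big[\log(1/\delta)+b(t)\big]^{K}$, where $$a(t)\doteq C\exp\Big(-\frac{\ln^{1-\nu}(t+1)}{1-\nu}\Big),\qquad b(t)\doteq C'+\frac{\ln^{1-\nu}(t+1)}{1-\nu}$$ (such constants $\bar C_\alpha, C, C', K$ exist by the concentration result for this algorithm). Then for any $p\ge 2$ and any $t\ge 0$, $$\mathbb{E}\big[\|w_t-w_*\|^{2p}\big]\le\big(a(t)\,b(t)^{K}\big)^p+K p\, a(t)^p\exp(b(t))\,\big((Kp)!\big).$$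
   Context: (A1) $\{Y_t\}$ has a unique stationary distribution $d_{\mathcal{Y}}$ and there exist $\varrho\in[0,1)$, $C_A$ with $\int_{\mathcal{Y}}|P^n(y,y')-d_{\mathcal{Y}}(y')|\,\mathrm{d}y'\le C_A\varrho^n$ for all $y$, $n$ ($P^n$ the $n$-step kernel). (A2) There are $\kappa\in[0,1)$ and a norm $\|\cdot\|$ with $\|h(w)-h(w')\|\le\kappa\|w-w'\|$; $w_*$ is the unique fixed point of $h$. (A3) There is $L_h<\infty$ with $\|H(w,y)-H(w',y)\|\le L_h\|w-w'\|$ for all $w,w',y$ and $\sup_y\|H(0,y)\|<\infty$. For a non-integer $x\ge0$, $x!$ is understood as $\Gamma(x+1)$. *)

From HB Require Import structures.
From mathcomp Require Import all_boot all_order all_algebra.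
From mathcomp Require Import all_classical all_reals all_analysis.
Set Implicit Arguments. Unset Strict Implicit. Unset Printing Implicit Defensive.
Import Order.TTheory GRing.Theory Num.Theory.
Local Open Scope classical_set_scope.
Local Open Scope ring_scope.

Definition is_norm (R : realType) (d : nat) (nrm : 'rV[R]_d -> R) : Prop :=
  [/\ forall x, 0 <= nrm x,
      forall x, nrm x = 0 -> x = 0,
      forall (a : R) x, nrm (a *: x) = `|a| * nrm x &
      forall x y, nrm (x + y) <= nrm x + nrm y].

Fixpoint nstep (R : realType) (dY : measure_display) (Y : measurableType dY)
  (P : R.-pker Y ~> Y) (n : nat) (y : Y) (B : set Y) : \bar R :=
  match n with
  | 0 => \d_y B
  | n'.+1 => (\int[P y]_z nstep P n' z B)%E
  end.

Definition stationary (R : realType) (dY : measure_display) (Y : measurableType dY)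
  (P : R.-pker Y ~> Y) (mu : probability Y R) : Prop :=
  forall B, measurable B -> (\int[mu]_y P y B)%E = mu B.

Definition markov_chain (R : realType) (d0 : measure_display) (Omega : measurableType d0)
  (Pr : probability Omega R) (dY : measure_display) (Y : measurableType dY)
  (Yc : nat -> Omega -> Y) (P : R.-pker Y ~> Y) : Prop :=
  (forall t, measurable_fun setT (Yc t)) /\
  forall (t : nat) (A : nat -> set Y) (B : set Y),
    (forall i, measurable (A i)) -> measurable B ->
    Pr ([set om | forall i, (i <= t)%N -> A i (Yc i om)] `&` [set om | B (Yc t.+1 om)])
    = (\int[Pr]_(om in [set om | forall i, (i <= t)%N -> A i (Yc i om)])
          P (Yc t om) B)%E.

Fixpoint sa_iter (R : realType) (d : nat) (Y : Type) (H : 'rV[R]_d -> Y -> 'rV[R]_d)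
  (alpha : nat -> R) (w0 : 'rV[R]_d) (Yc : nat -> Y) (t : nat) : 'rV[R]_d :=
  match t with
  | 0 => w0
  | t'.+1 => let w := sa_iter H alpha w0 Yc t' in
             w + alpha t' *: (H w (Yc t'.+1) - w)
  end.

Definition step_size (R : realType) (Calpha nu : R) (t : nat) : R :=
  Calpha / ((t + 3)%:R * powR (ln (t + 3)%:R) nu).

Definition a_fun (R : realType) (C nu : R) (t : nat) : R :=
  C * expR (- (powR (ln (t + 1)%:R) (1 - nu) / (1 - nu))).

Definition b_fun (R : realType) (C' nu : R) (t : nat) : R :=
  C' + powR (ln (t + 1)%:R) (1 - nu) / (1 - nu).

(* x! := Gamma(x+1) for real x >= 0 (Euler's integral), agreeing with the
   factorial on nonnegative integers. *)
Definition gamma_fact (R : realType) (x : R) : \bar R :=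
  (\int[@lebesgue_measure R]_(s in `[0%R, +oo[%classic) (powR s x * expR (- s))%:E)%E.

From HB Require Import structures.
From mathcomp Require Import all_boot all_order all_algebra.
From mathcomp Require Import all_classical all_reals all_analysis.
From mathcomp Require Import measurable_realfun.
From mathcomp Require Import ring lra.
Set Implicit Arguments.
Unset Strict Implicit.
Unset Printing Implicit Defensive.

Import Order.TTheory GRing.Theory Num.Theory HBNNSimple.
Local Open Scope classical_set_scope.
Local Open Scope ring_scope.

(* Put f = |w_t - w_*|^(2p), A = a(t)^p and q = K p.  Choosing delta = e^(b(t) - y) in
   the concentration bound shows that, for y > max(b(t), 0), f <= A y^q outside an event
   of probability at most e^(b(t) - y).  The layer-cake formula then gives
     E f <= A max(b,0)^q + \int q A y^(q-1) e^(b-y) dy <= (a b^K)^p + q A e^b Gamma(q + 1).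
   Since f need not be measurable, the bound is proved for every simple function below f,
   through a discrete layer-cake sum over the levels A (max(b,0) + n/16)^q; the slack
   between Gamma(q) and Gamma(q + 1) absorbs the discretisation error.  When a(t) <= 0
   the same tail bound forces f = 0 almost surely. *)

Section PowRInequalities.
Variable R : realType.
Implicit Types A b q r y z : R.

Lemma powR_ge_tangent1 q r : 1 <= q -> 0 <= r -> 1 - q * (1 - r) <= powR r q.
Proof.
move=> q1 r0; have [->|q_neq1] := eqVneq q 1; first by rewrite powRr1 //; lra.
have q_gt1 : 1 < q by rewrite lt_neqAle eq_sym q_neq1.
have q'0 : 0 < q / (q - 1) by rewrite divr_gt0 //; lra.
have conj : q^-1 + (q / (q - 1))^-1 = 1 by field; apply/andP; split; lra.
have := conjugate_powR r0 ler01 (lt_le_trans ltr01 q1) q'0 conj.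
rewrite mulr1 powR1 invf_div => young.
have -> : 1 - q * (1 - r) = q * (r - (q - 1) / q) by field; lra.
by rewrite -ler_pdivlMl; lra.
Qed.

Lemma powR_increment_le q y z : 1 <= q -> 0 <= z <= y -> 0 < y ->
  powR y q - powR z q <= q * (y - z) * powR y q / y.
Proof.
move=> q1 /andP[z0 zy] y0.
have y_neq0 : y != 0 by rewrite gt_eqF.
have -> : z = y * (z / y) by rewrite mulrC divfK.
rewrite powRM ?divr_ge0 ?(ltW y0) //.
have tangent := powR_ge_tangent1 q1 (divr_ge0 z0 (ltW y0)).
have -> : q * (y - y * (z / y)) * powR y q / y = powR y q * (q * (1 - z / y)).
  by field.
rewrite -[X in X - _]mulr1 -mulrBr ler_wpM2l ?powR_ge0 //; lra.
Qed.

Lemma four_powR_le q y : 2 <= q -> 0 < y -> 4 * powR y q <= y * powR (y + 1) q.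
Proof.
move=> q2 y0; set r := (y + 1) / y.
have y_neq0 : y != 0 by rewrite gt_eqF.
have r1 : 1 <= r by rewrite /r ler_pdivlMr // mul1r; lra.
have -> : y + 1 = y * r by rewrite /r mulrC divfK.
rewrite powRM ?(ltW y0) //; last lra.
have r2q : r ^+ 2 <= powR r q by rewrite -powR_mulrn ?(ler_powR r1 q2) //; lra.
have y_r2 : 4 <= y * r ^+ 2.
  have -> : y * r ^+ 2 = (y + 1) ^+ 2 / y by rewrite /r; field.
  by rewrite ler_pdivlMr // sqrrD; have := sqr_ge0 (y - 1); rewrite sqrrB; lra.
have : y * r ^+ 2 <= y * powR r q by rewrite ler_wpM2l ?(ltW y0).
have := powR_ge0 y q; nra.
Qed.

Lemma expR_9_8_le4 : expR (9 / 8) <= 4 :> R.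
Proof.
have e932 : expR (9 / 32) <= 32 / 23 :> R.
  have := expR_ge1Dx (- (9 / 32) : R); have := expRxMexpNx_1 (9 / 32 : R).
  have := expR_gt0 (9 / 32 : R); nra.
have -> : 9 / 8 = 4%:R * (9 / 32) :> R by rewrite -[4%:R]/(4 : R); field.
rewrite expRM_natl; apply: le_trans (lerXn2r 4 _ _ e932) _;
  rewrite ?nnegrE ?expR_ge0 //.
by rewrite !exprS expr0; lra.
Qed.

(* Comparing with the Gamma integrand on the cell shifted by 17/16 costs a factor
   e^(9/8) <= 4, which [four_powR_le] pays for. *)
Lemma powR_layer_increment_le q A b z : 2 <= q -> 0 <= A -> 0 <= z ->
  (A * powR (z + 16^-1) q - A * powR z q) * expR (b - z) <=
  q * A * expR b * (16^-1 * (powR (z + 17 / 16) q * expR (- (z + 9 / 8)))).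
Proof.
move=> q2 A0 z0; set y := z + 16^-1.
have y0 : 0 < y by rewrite /y; lra.
have inc := @powR_increment_le q y z ltac:(lra) ltac:(rewrite /y; lra) y0.
have -> : z + 17 / 16 = y + 1 by rewrite /y; lra.
have -> : expR (b - z) = expR b * expR (- z) by rewrite expRD.
have -> : expR (- (z + 9 / 8)) = expR (- z) / expR (9 / 8).
  by rewrite -expRB; congr expR; lra.
have -> : q * A * expR b * (16^-1 * (powR (y + 1) q * (expR (- z) / expR (9 / 8)))) =
    A * expR b * expR (- z) * (q * (16^-1 * (powR (y + 1) q / expR (9 / 8)))) by ring.
have -> : (A * powR y q - A * powR z q) * (expR b * expR (- z)) =
    A * expR b * expR (- z) * (powR y q - powR z q) by ring.
apply: ler_wpM2l.
  by rewrite mulr_ge0 ?expR_ge0 // mulr_ge0 ?expR_ge0.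
have Py_y : powR y q / y <= powR (y + 1) q / 4.
  by rewrite ler_pdivrMr // mulrAC ler_pdivlMr //; have := four_powR_le q2 y0; lra.
have P1_4 : powR (y + 1) q / 4 <= powR (y + 1) q / expR (9 / 8).
  by rewrite ler_wpM2l ?powR_ge0 // lef_pV2 ?posrE ?expR_gt0 ?expR_9_8_le4.
apply: le_trans inc _; rewrite (_ : y - z = 16^-1); last by rewrite /y; lra.
rewrite -!mulrA; apply: ler_wpM2l; first lra.
by apply: ler_wpM2l; [lra | exact: le_trans Py_y P1_4].
Qed.

End PowRInequalities.

Lemma min_sub_le_layer_sum (R : realDomainType) (c : nat -> R) v N :
  (forall n, c n <= c n.+1) ->
  Num.min v (c N) - c 0 <= \sum_(n < N) (c n.+1 - c n) * ((c n < v)%R)%:R.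
Proof.
move=> c_nd; elim: N => [|N IH]; first by rewrite big_ord0 subr_le0 ge_min lexx orbT.
rewrite big_ord_recr /=; have cN := c_nd N.
have [vN|Nv] := leP v (c N).
  rewrite (@min_l _ _ v (c N.+1)); last exact: le_trans cN.
  rewrite min_l // in IH; apply: le_trans IH _.
  by rewrite lerDl mulr_ge0 ?subr_ge0.
rewrite min_r ?(ltW Nv) // in IH.
have : Num.min v (c N.+1) <= c N.+1 by rewrite ge_min lexx orbT.
rewrite mulr1; lra.
Qed.

Section IndicatorSums.
Context d (T : measurableType d) (R : realType) (mu : {measure set T -> \bar R}).
Local Open Scope ereal_scope.

Lemma integral_sum_indic (D : set T) (B : nat -> set T) (w : nat -> R) N :
  measurable D -> (forall n, measurable (B n)) -> (forall n, (0 <= w n)%R) ->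
  \int[mu]_(x in D) (\sum_(n < N) w n * \1_(B n) x)%:E =
  \sum_(n < N) (w n)%:E * mu (B n `&` D).
Proof.
move=> mD mB w0; under eq_integral do rewrite -sumEFin.
rewrite ge0_integral_sum //; last 2 first.
- by move=> n; apply/measurable_EFinP/measurable_funM.
- by move=> n x _; rewrite lee_fin mulr_ge0 // indic_ge0.
apply: eq_bigr => n _.
have wn_ge0 : (w n < 0)%R -> B n = set0 by rewrite ltNge w0.
by rewrite (integralZl_indic _ (fun=> B n) _ wn_ge0) ?integral_indic.
Qed.

End IndicatorSums.

Section GammaFunction.
Variable R : realType.
Local Open Scope ereal_scope.

Lemma gamma_fact_ge0 (x : R) : 0 <= gamma_fact x.
Proof. by apply: integral_ge0 => s _; rewrite lee_fin mulr_ge0 ?powR_ge0 ?expR_ge0. Qed.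

Let cell (c h : R) (n : nat) : set R := [set` `[c + n%:R * h, c + n.+1%:R * h[%R].

Let cell_inj (c h s : R) n k : (0 < h)%R -> cell c h n s -> cell c h k s -> n = k.
Proof.
move=> h0; rewrite /cell /= !in_itv /= => /andP[ns sn] /andP[ks sk].
have lt_cells i j : (c + i%:R * h <= s)%R -> (s < c + j.+1%:R * h)%R -> (i <= j)%N.
  move=> si sj; rewrite -ltnS -(ltr_nat R) -(ltr_pM2r h0); lra.
by apply/eqP; rewrite eqn_leq !lt_cells.
Qed.

Lemma gamma_fact_ge_lower_sum (q c h : R) N : (0 <= q)%R -> (0 <= c)%R -> (0 < h)%R ->
  \sum_(n < N) (h * (powR (c + n%:R * h) q * expR (- (c + n.+1%:R * h))))%:E
  <= gamma_fact q.
Proof.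
move=> q0 c0 h0.
pose m n := (powR (c + n%:R * h) q * expR (- (c + n.+1%:R * h)))%R.
have m_ge0 n : (0 <= m n)%R by rewrite mulr_ge0 ?powR_ge0 ?expR_ge0.
pose D : set R := `[0%R, +oo[%classic.
have mD : measurable D by exact: measurable_itv.
have cellD n : cell c h n `<=` D.
  move=> s; rewrite /cell /D /= !in_itv /= andbT => /andP[+ _].
  by apply: le_trans; rewrite addr_ge0 ?mulr_ge0 ?(ltW h0).
have leb_cell n : lebesgue_measure (cell c h n) = h%:E.
  rewrite lebesgue_measure_itv /= lte_fin ltrD2l ltr_pM2r // ltr_nat ltnSn.
  by rewrite -EFinD -natr1; congr _%:E; lra.
have -> : \sum_(n < N) (h * m n)%:E =
    \int[lebesgue_measure]_(s in D) (\sum_(n < N) m n * \1_(cell c h n) s)%:E.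
  rewrite integral_sum_indic //; last by move=> n; exact: measurable_itv.
  by apply: eq_bigr => n _; rewrite setIidl // EFinM -(leb_cell n) muleC.
rewrite /gamma_fact; apply: ge0_le_integral => //.
- by move=> s _; rewrite lee_fin sumr_ge0 // => n _; rewrite mulr_ge0 ?indic_ge0.
- apply/measurable_EFinP; apply: measurable_sum => n; apply: measurable_funM => //.
  by apply: measurable_indic; exact: measurable_itv.
- apply/measurable_EFinP; apply: measurable_funM.
    exact: measurable_funTS (measurable_powR _).
  by apply: measurable_funTS; apply: measurableT_comp => //; exact: measurable_funN.
move=> s Ds; rewrite lee_fin.
have f_ge0 : (0 <= powR s q * expR (- s))%R by rewrite mulr_ge0 ?powR_ge0 ?expR_ge0.
have [[k sk]|no_cell] := pselect (exists k : 'I_N, cell c h k s); last first.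
  rewrite big1 // => n _; rewrite indicE memNset ?mulr0 //.
  by move=> sn; apply: no_cell; exists n.
rewrite (bigD1 k) //= big1 ?addr0; last first.
  move=> n nk; rewrite indicE memNset ?mulr0 // => sn.
  by move/negP: nk; apply; apply/eqP/val_inj/(cell_inj h0 sn sk).
rewrite indicE mem_set // mulr1; move: sk; rewrite /cell /= in_itv /= => /andP[ks sk].
apply: ler_pM; rewrite ?powR_ge0 ?expR_ge0 //.
- have ck0 : (0 <= c + k%:R * h)%R by rewrite addr_ge0 ?mulr_ge0 ?(ltW h0).
  by apply: ge0_ler_powR; rewrite ?nnegrE // (le_trans ck0).
- by rewrite ler_expR lerN2 ltW.
Qed.

Lemma powR_layer_sum_le_gamma (A b q z : R) N : (0 <= A)%R -> (2 <= q)%R -> (0 <= z)%R ->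
  \sum_(n < N) ((A * powR (z + n.+1%:R / 16) q - A * powR (z + n%:R / 16) q)
                 * expR (b - (z + n%:R / 16)))%:E
  <= (q * A * expR b)%:E * gamma_fact q.
Proof.
move=> A0 q2 z0; set cc := (z + 17 / 16)%R.
have cc0 : (0 <= cc)%R by rewrite /cc; lra.
apply: (@le_trans _ _ (\sum_(n < N) (q * A * expR b)%:E *
    (16^-1 * (powR (cc + n%:R / 16) q * expR (- (cc + n.+1%:R / 16))))%:E)).
  apply: lee_sum => n _; rewrite -EFinM lee_fin.
  have zn0 : (0 <= z + n%:R / 16)%R by rewrite addr_ge0 ?divr_ge0.
  have := powR_layer_increment_le b q2 A0 zn0.
  have -> : (z + n%:R / 16 + 16^-1 = z + n.+1%:R / 16)%R by rewrite -[n.+1]addn1 natrD; lra.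
  have -> : (z + n%:R / 16 + 17 / 16 = cc + n%:R / 16)%R by rewrite /cc; lra.
  suff -> : (z + n%:R / 16 + 9 / 8 = cc + n.+1%:R / 16)%R by [].
  by rewrite /cc -[n.+1]addn1 natrD; lra.
rewrite -ge0_sume_distrr; last first.
  by move=> n _; rewrite lee_fin mulr_ge0 ?mulr_ge0 ?powR_ge0 ?expR_ge0.
apply: lee_wpmul2l; first by rewrite lee_fin !mulr_ge0 ?expR_ge0 //; lra.
by apply: gamma_fact_ge_lower_sum => //; lra.
Qed.

End GammaFunction.

Lemma ge0_integral_le_nnsfun d (T : measurableType d) (R : realType)
    (mu : {measure set T -> \bar R}) (f : T -> R) (M : \bar R) :
  (forall x, 0 <= f x)%R ->
  (forall g : {nnsfun T >-> R}, (forall x, g x <= f x)%R -> \int[mu]_x (g x)%:E <= M)%E ->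
  (\int[mu]_x (f x)%:E <= M)%E.
Proof.
move=> f0 gM; rewrite ge0_integralTE; last by move=> x; rewrite lee_fin.
apply: ge_ereal_sup => _ [g /= gf <-].
have -> : sintegral mu g = (\int[mu]_x (g x)%:E)%E by rewrite integral_nnsfun // patch_setT.
by apply: gM => x; rewrite -lee_fin.
Qed.

Lemma nnsfun_le_bound d (T : measurableType d) (R : realType) (g : {nnsfun T >-> R}) :
  exists M, forall x, (0 <= g x <= M)%R.
Proof.
have [M [_ gM]] := simple_bounded g; exists (M + 1)%R => x.
by rewrite fun_ge0 /= (le_trans (ler_norm _)) // gM // ltrDl.
Qed.

Lemma le0_of_le_expR (R : realType) (r b : R) :
  (forall y, 0 <= y -> r <= expR (b - y))%R -> (r <= 0)%R.
Proof.
move=> r_le; rewrite leNgt; apply/negP => r0.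
have y0 : (0 <= Num.max 0 (b - ln r) + 1)%R by rewrite addr_ge0 // le_max lexx.
have := r_le _ y0; rewrite leNgt => /negP; apply.
rewrite -[X in (_ < X)%R](lnK r0) ltr_expR.
have : (b - ln r <= Num.max 0 (b - ln r))%R by rewrite le_max lexx orbT.
lra.
Qed.

Section ExponentialTails.
Context d (Omega : measurableType d) (R : realType) (Pr : probability Omega R).
Local Open Scope ereal_scope.

Definition exp_tail_bounded (f : Omega -> R) (b : R) (phi : R -> R) : Prop :=
  forall y, (0 <= y)%R -> (b < y)%R -> exists E, measurable E /\
    (1 - expR (b - y))%:E <= Pr E /\ forall w, E w -> (f w <= phi y)%R.

Lemma exp_tail_bounded_le (f f' : Omega -> R) (b : R) (phi phi' : R -> R) :
  (forall y w, (0 <= y)%R -> (f w <= phi y)%R -> (f' w <= phi' y)%R) ->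
  exp_tail_bounded f b phi -> exp_tail_bounded f' b phi'.
Proof.
move=> ff' tail y y0 yb; have [E [mE [PE fE]]] := tail y y0 yb.
by exists E; split => //; split => // w /fE /ff'; apply.
Qed.

Lemma exp_tail_bounded_of_concentration (f : Omega -> R) (b : R) (phi : R -> R) :
  (forall delta : R, (0 < delta < 1)%R -> exists E, measurable E /\
     (1 - delta)%R%:E <= Pr E /\ forall w, E w -> (f w <= phi (ln (1 / delta) + b))%R) ->
  exp_tail_bounded f b phi.
Proof.
move=> conc y y0 yb.
have delta01 : (0 < expR (b - y) < 1)%R by rewrite expR_gt0 expR_lt1; lra.
have [E [mE [PE fE]]] := conc _ delta01; exists E; split => //; split => // w /fE.
by rewrite div1r -expRN expRK opprB subrK.
Qed.

Lemma exp_tail_bounded_powR (f : Omega -> R) (b a p : R) K :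
  (0 < a)%R -> (0 <= p)%R -> (forall w, 0 <= f w)%R ->
  exp_tail_bounded f b (fun y => a * y ^+ K)%R ->
  exp_tail_bounded (fun w => powR (f w) p) b (fun y => powR a p * powR y (K%:R * p))%R.
Proof.
move=> a0 p0 f0; apply: exp_tail_bounded_le => y w y0 fw.
rewrite powRrM powR_mulrn // -powRM ?exprn_ge0 ?(ltW a0) //.
by rewrite ge0_ler_powR ?nnegrE ?mulr_ge0 ?exprn_ge0 ?(ltW a0).
Qed.

Lemma exp_tail_bounded_powR_le0 (f : Omega -> R) (b a p : R) K :
  (a <= 0)%R -> (0 < p)%R -> (forall w, 0 <= f w)%R ->
  exp_tail_bounded f b (fun y => a * y ^+ K)%R ->
  exp_tail_bounded (fun w => powR (f w) p) b (fun=> 0%R).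
Proof.
move=> a0 p0 f0; apply: exp_tail_bounded_le => y w y0 fw.
have fw0 : f w = 0%R.
  by apply/eqP; rewrite eq_le f0 (le_trans fw) // mulr_le0_ge0 ?exprn_ge0.
by rewrite fw0 powR0 // gt_eqF.
Qed.

Lemma measurable_fun_gt (g : Omega -> R) (c : R) :
  measurable_fun setT g -> measurable [set w | (c < g w)%R].
Proof. by move=> mg; rewrite -[X in measurable X]setTI -preimage_itvoy; exact: mg. Qed.

Lemma integral_le_layer_sum (g : Omega -> R) (c : nat -> R) N :
  measurable_fun setT g -> (forall w, 0 <= g w <= c N)%R -> (0 <= c 0)%R ->
  (forall n, c n <= c n.+1)%R ->
  \int[Pr]_w (g w)%:E <=
  (c 0)%:E + \sum_(n < N) (c n.+1 - c n)%:E * Pr [set w | (c n < g w)%R].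
Proof.
move=> mg g_bnd c00 c_nd; pose B n := [set w | (c n < g w)%R].
have mB n : measurable (B n) by exact: measurable_fun_gt.
have dc0 n : (0 <= c n.+1 - c n)%R by rewrite subr_ge0.
have mlayers : measurable_fun setT (fun w => \sum_(n < N) (c n.+1 - c n) * \1_(B n) w)%R.
  by apply: measurable_sum => n; apply: measurable_funM => //; exact: measurable_indic.
apply: (@le_trans _ _ (\int[Pr]_w (c 0 + \sum_(n < N) (c n.+1 - c n) * \1_(B n) w)%:E)).
  apply: ge0_le_integral => //.
  - by move=> w _; rewrite lee_fin; have /andP[] := g_bnd w.
  - exact/measurable_EFinP.
  - by apply/measurable_EFinP; apply: measurable_funD.
  move=> w _; rewrite lee_fin.
  have indB n : \1_(B n) w = ((c n < g w)%R)%:R.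
    rewrite indicE; have [cg|gc] := boolP (c n < g w)%R; first by rewrite mem_set.
    by rewrite memNset //; exact/negP.
  under eq_bigr do rewrite indB.
  have := min_sub_le_layer_sum (g w) N c_nd; have /andP[_ gN] := g_bnd w.
  by rewrite min_l //; lra.
under eq_integral do rewrite EFinD.
rewrite ge0_integralD //; first last.
- exact/measurable_EFinP.
- by move=> w _; rewrite lee_fin sumr_ge0 // => n _; rewrite mulr_ge0 ?indic_ge0.
rewrite integral_cst // [X in _ * X](_ : _ = 1); last exact: probability_setT.
rewrite mule1 (integral_sum_indic _ (w := fun n => c n.+1 - c n)%R) //.
by under eq_bigr do rewrite setIT.
Qed.

Lemma exp_tail_prob_le (g : Omega -> R) (b : R) (phi : R -> R) (y : R) :
  measurable_fun setT g -> exp_tail_bounded g b phi -> (0 <= y)%R ->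
  Pr [set w | (phi y < g w)%R] <= (expR (b - y))%:E.
Proof.
move=> mg tail y0; have [by_|yb] := ltP b y; last first.
  apply: le_trans (probability_le1 _ (measurable_fun_gt _ mg)) _.
  by rewrite lee_fin; have := expR_ge1Dx (b - y); lra.
have [E [mE [PE gE]]] := tail y y0 by_.
have sub : [set w | (phi y < g w)%R] `<=` ~` E.
  by move=> w /= gw /gE; rewrite leNgt gw.
apply: le_trans (le_measure _ (mem_set (measurable_fun_gt _ mg)) (mem_set (measurableC mE)) sub) _.
rewrite [X in X <= _](_ : _ = 1 - Pr E); last exact: probability_setC.
move: PE (probability_le1 Pr mE) (measure_ge0 Pr E).
by case: (Pr E) => [r| |] //=; rewrite !lee_fin; lra.
Qed.

Lemma bounded_exp_tail_integral_le (g : Omega -> R) (M A b q : R) :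
  measurable_fun setT g -> (forall w, 0 <= g w <= M)%R -> (0 < A)%R -> (2 <= q)%R ->
  exp_tail_bounded g b (fun y => A * powR y q)%R ->
  \int[Pr]_w (g w)%:E <=
  (A * powR (Num.max b 0%R) q)%:E + (q * A * expR b)%:E * gamma_fact q.
Proof.
move=> mg g_bnd A0 q2 tail; set be := (Num.max b 0)%R.
have be0 : (0 <= be)%R by rewrite le_max lexx orbT.
pose Y n := (be + n%:R / 16)%R; pose c n := (A * powR (Y n) q)%R.
have Y0 n : (0 <= Y n)%R by rewrite addr_ge0 ?divr_ge0.
have c_nd n : (c n <= c n.+1)%R.
  rewrite ler_wpM2l ?(ltW A0) // ge0_ler_powR ?nnegrE //; first lra.
  by rewrite lerD2l ler_pM2r // ler_nat.
have [N M_cN] : exists N, (M <= c N)%R.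
  pose x := (16 * (1 + `|M| / A))%R.
  have x0 : (0 <= x)%R by rewrite mulr_ge0 // addr_ge0 ?divr_ge0 ?(ltW A0).
  exists (Num.bound x); have := archi_boundP x0.
  have := ler_norm M; have := divr_ge0 (normr_ge0 M) (ltW A0).
  set K := Num.bound x => MA0 MM xK.
  have YK : (1 + `|M| / A <= Y K)%R by rewrite /Y /x in xK *; lra.
  have : (Y K <= powR (Y K) q)%R.
    by rewrite -[leLHS](powRr1 (Y0 K)) ler_powR //; lra.
  have : (A * (1 + `|M| / A) = A + `|M|)%R by field; exact: lt0r_neq0.
  rewrite /c; nra.
have c00 : (0 <= c 0)%R by rewrite mulr_ge0 ?powR_ge0 ?(ltW A0).
have g_cN w : (0 <= g w <= c N)%R by have /andP[-> /le_trans->] := g_bnd w.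
apply: le_trans (integral_le_layer_sum mg g_cN c00 c_nd) _.
apply: leeD; first by rewrite /c /Y mul0r addr0.
apply: le_trans (powR_layer_sum_le_gamma b N (ltW A0) q2 be0).
apply: lee_sum => n _; rewrite EFinM; apply: lee_wpmul2l.
  by rewrite lee_fin subr_ge0.
exact: (exp_tail_prob_le mg tail (Y0 n)).
Qed.

Lemma exp_tail_integral_le (f : Omega -> R) (A b q : R) :
  (forall w, 0 <= f w)%R -> (0 < A)%R -> (2 <= q)%R ->
  exp_tail_bounded f b (fun y => A * powR y q)%R ->
  \int[Pr]_w (f w)%:E <=
  (A * powR (Num.max b 0%R) q)%:E + (q * A * expR b)%:E * gamma_fact q.
Proof.
move=> f0 A0 q2 tail; apply: ge0_integral_le_nnsfun => // g gf.
have [M g_bnd] := nnsfun_le_bound g.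
apply: bounded_exp_tail_integral_le g_bnd A0 q2 _; first exact: measurable_funPT.
by apply: exp_tail_bounded_le tail => y w _; apply: le_trans.
Qed.

Lemma exp_tail_integral_le0 (f : Omega -> R) (b : R) :
  (forall w, 0 <= f w)%R -> exp_tail_bounded f b (fun=> 0%R) -> \int[Pr]_w (f w)%:E <= 0.
Proof.
move=> f0 tail; apply: ge0_integral_le_nnsfun => // g gf.
have [M g_bnd] := nnsfun_le_bound g; have mg : measurable_fun setT g by exact: measurable_funPT.
have tail_g : exp_tail_bounded g b (fun=> 0%R).
  by apply: exp_tail_bounded_le tail => y w _; apply: le_trans.
pose c n := (n%:R * `|M|)%R.
have c_nd n : (c n <= c n.+1)%R by rewrite ler_wpM2r ?ler_nat.
have g_c1 w : (0 <= g w <= c 1%N)%R.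
  by have /andP[-> /le_trans->] := g_bnd w; rewrite // /c mul1r ler_norm.
apply: le_trans (integral_le_layer_sum mg g_c1 _ c_nd) _; first by rewrite /c mul0r.
rewrite big_ord1 /c !mul0r add0e subr0 mul1r.
have := exp_tail_prob_le mg tail_g; move: (measure_ge0 Pr [set w | 0 < g w]%R).
case: (Pr _) => [p| |] //= p0 p_le; last first.
  by have := p_le 0%R (lexx _); rewrite leye_eq.
have p_le0 : (p <= 0)%R by apply: (@le0_of_le_expR _ _ b) => y /p_le; rewrite lee_fin.
by rewrite -EFinM lee_fin mulr_ge0_le0.
Qed.

End ExponentialTails.

Theorem corollary1
  (R : realType) (d : nat)
  (d0 : measure_display) (Omega : measurableType d0) (Pr : probability Omega R)
  (dY : measure_display) (Y : measurableType dY)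
  (P : R.-pker Y ~> Y) (Yc : nat -> Omega -> Y)
  (HPmc : markov_chain Pr Yc P)
  (dYst : probability Y R)
  (* (A1) *)
  (A1_stat : stationary P dYst)
  (A1_uniq : forall mu : probability Y R, stationary P mu ->
               forall B, measurable B -> mu B = dYst B)
  (A1_mix : exists (rho CA : R), 0 <= rho < 1 /\
      forall (y : Y) (n : nat) (B : set Y), measurable B ->
        (`| nstep P n y B - dYst B | <= (CA * rho ^+ n)%:E)%E)
  (nrm : 'rV[R]_d -> R) (Hnrm : is_norm nrm)
  (H : 'rV[R]_d -> Y -> 'rV[R]_d)
  (HHmeas : forall w (i : 'I_d), measurable_fun setT (fun y => H w y 0 i))
  (h : 'rV[R]_d -> 'rV[R]_d)
  (Hh : forall w, h w = \row_(i < d) Rintegral dYst setT (fun y => H w y 0 i))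
  (* (A2) *)
  (kappa : R) (Hkappa : 0 <= kappa < 1)
  (A2 : forall w w', nrm (h w - h w') <= kappa * nrm (w - w'))
  (wstar : 'rV[R]_d) (Hwstar : h wstar = wstar)
  (Hwstar_uniq : forall w, h w = w -> w = wstar)
  (* (A3) *)
  (Lh : R)
  (A3_lip : forall w w' y, nrm (H w y - H w' y) <= Lh * nrm (w - w'))
  (A3_bnd : exists M : R, forall y, nrm (H 0 y) <= M)
  (* algorithm *)
  (w0 : 'rV[R]_d) (nu Calpha Cbar : R)
  (Hnu : 0 < nu < 1) (HCalpha : 0 < Calpha) (HCbar : Cbar <= Calpha)
  (C C' : R) (K : nat) (HK : (0 < K)%N)
  (Hconc : forall delta : R, 0 < delta < 1 ->
     exists E : set Omega, measurable E /\ ((1 - delta)%:E <= Pr E)%E /\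
       forall om, E om -> forall t : nat,
         nrm (sa_iter H (step_size Calpha nu) w0 (fun s => Yc s om) t - wstar) ^+ 2
         <= a_fun C nu t * (ln (1 / delta) + b_fun C' nu t) ^+ K)
  (p : R) (Hp : 2 <= p) (t : nat) :
  (\int[Pr]_om (powR (nrm (sa_iter H (step_size Calpha nu) w0 (fun s => Yc s om) t
                             - wstar)) (2 * p))%:E
   <= (powR (a_fun C nu t * b_fun C' nu t ^+ K) p)%:E
      + (K%:R * p * powR (a_fun C nu t) p * expR (b_fun C' nu t))%:E
        * gamma_fact (K%:R * p))%E.
Proof.
set a := a_fun C nu t; set b := b_fun C' nu t.
pose X om := nrm (sa_iter H (step_size Calpha nu) w0 (fun s => Yc s om) t - wstar).
have X0 om : 0 <= X om by case: Hnrm => nrm_ge0 _ _ _; exact: nrm_ge0.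
have p_gt0 : 0 < p by lra.
have tail : exp_tail_bounded Pr (fun om => X om ^+ 2) b (fun y => a * y ^+ K).
  apply: exp_tail_bounded_of_concentration => delta /Hconc[E [mE [PE XE]]].
  by exists E; split => //; split => // w /XE /(_ t).
have powX om : powR (X om) (2 * p) = powR (X om ^+ 2) p by rewrite powRrM -powR_mulrn.
rewrite (eq_integral (fun om => (powR (X om ^+ 2) p)%:E)); last by move=> om _; rewrite -powX.
have [a_le0|a_gt0] := leP a 0.
  have tail0 := exp_tail_bounded_powR_le0 a_le0 p_gt0 (fun om => sqr_ge0 _) tail.
  apply: le_trans (exp_tail_integral_le0 (fun om => powR_ge0 _ _) tail0) _.
  apply: adde_ge0; first by rewrite lee_fin powR_ge0.
  by apply: mule_ge0; rewrite ?gamma_fact_ge0 // lee_fin !mulr_ge0 ?powR_ge0 ?expR_ge0 ?(ltW p_gt0).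
have K_ge1 : 1 <= K%:R :> R by rewrite ler1n.
have Kp2 : 2 <= K%:R * p by nra.
have tailp := exp_tail_bounded_powR a_gt0 (ltW p_gt0) (fun om => sqr_ge0 _) tail.
apply: le_trans (exp_tail_integral_le (fun om => powR_ge0 _ _) (powR_gt0 p a_gt0) Kp2 tailp) _.
apply: leeD => //; rewrite lee_fin.
have [b0|b_lt0] := leP 0 b.
  by rewrite powRM ?exprn_ge0 ?(ltW a_gt0) // powRrM powR_mulrn.
by rewrite powR0 ?mulr0 ?powR_ge0 // mulf_neq0 ?pnatr_eq0 -?lt0n //; lra.
Qed.
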